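(* Suppose that for every finite graph $G=(V,E)$, every ferromagnetic pair interactions $\mathbf J$ on $G$, every $k\in\mathbb N$, every $j_1,\dots,j_{2k}\in V$ (not necessarily distinct) and every $u_0v_0\in E$ with $v_0\notin\{j_1,\dots,j_{2k}\}$, one has $(-1)^{k-1}\partial u_{2k}(\sigma_{j_1},\dots,\sigma_{j_{2k}})/\partial J_{u_0v_0}\ge0$. Then for every finite graph $G$, every ferromagnetic $\mathbf J$ on $G$, every $k\in\mathbb N$, every $j_1,\dots,j_{2k}\in V$ and every $u_0v_0\in E$ with $u_0\in\{j_1,\dots,j_{2k}\}$ and $v_0\in\{j_1,\dots,j_{2k}\}$, one also has $$(-1)^{k-1}\frac{\partial u_{2k}(\sigma_{j_1},\dots,\sigma_{j_{2k}})}{\partial J_{u_0v_0}}\ge0.$$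
   Context: Ferromagnetic pair interactions: $\mathbf J=(J_e)_{e\in E}$ with $J_e\ge0$. Ising model: $\mathbb P_G(\sigma)=\exp[\sum_{uv\in E}J_{uv}\sigma_u\sigma_v]/Z_G$ on $\{-1,1\}^V$, expectation $\langle\cdot\rangle_G$. Ursell function: $u_m(\sigma_{j_1},\dots,\sigma_{j_m})=\sum_{\mathscr P}(-1)^{|\mathscr P|-1}(|\mathscr P|-1)!\prod_{P\in\mathscr P}\langle\prod_{i\in P}\sigma_{j_i}\rangle_G$, the sum over all set partitions $\mathscr P$ of $\{1,\dots,m\}$; it is regarded as a function of $\mathbf J$. *)

From HB Require Import structures.
From mathcomp Require Import all_boot all_order all_algebra.
From mathcomp Require Import all_classical all_reals all_analysis.
Set Implicit Arguments. Unset Strict Implicit. Unset Printing Implicit Defensive.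
Import Order.TTheory GRing.Theory Num.Theory.
Local Open Scope ring_scope.

Section Ising.
Variables (R : realType) (V : finType).

Definition simple_graph (E : {set {set V}}) : Prop :=
  forall e, e \in E -> #|e| = 2%N.

(* Ferromagnetic pair interactions: J_e >= 0 for every edge (values of J
   off E are irrelevant). *)
Definition ferromagnetic (E : {set {set V}}) (J : {set V} -> R) : Prop :=
  forall e, e \in E -> 0 <= J e.

Definition spin (b : bool) : R := if b then 1 else -1.

Definition hamil (E : {set {set V}}) (J : {set V} -> R) (s : {ffun V -> bool}) : R :=
  \sum_(e in E) J e * \prod_(x in e) spin (s x).

Definition weight E J (s : {ffun V -> bool}) : R := expR (hamil E J s).

Definition partfun E J : R := \sum_(s : {ffun V -> bool}) weight E J s.

Definition moment E J (m : nat) (j : 'I_m -> V) (B : {set 'I_m}) : R :=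
  (\sum_(s : {ffun V -> bool}) (\prod_(i in B) spin (s (j i))) * weight E J s)
  / partfun E J.

Definition ursell E J (m : nat) (j : 'I_m -> V) : R :=
  \sum_(P : {set {set 'I_m}} | finset.partition P [set: 'I_m])
     (-1) ^+ (#|P|.-1) * ((#|P|.-1)`!)%:R * \prod_(B in P) moment E J j B.

Definition updJ (J : {set V} -> R) (e0 : {set V}) (t : R) : {set V} -> R :=
  fun e => if e == e0 then t else J e.

Definition dursell E J (m : nat) (j : 'I_m -> V) (e0 : {set V}) : R :=
  derive1 (fun t => ursell E (updJ J e0 t) j) (J e0).

End Ising.

From HB Require Import structures.
From mathcomp Require Import all_boot all_order all_algebra.
From mathcomp Require Import lra.
From mathcomp Require Import all_classical all_reals all_analysis.
Set Implicit Arguments. Unset Strict Implicit. Unset Printing Implicit Defensive.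
Import Order.TTheory GRing.Theory Num.Theory.
Local Open Scope ring_scope.

(* Attach to v0 one new leaf per index i, coupled to v0 with a positive
   interaction K, and move every site j_i = v0 onto its own leaf.  Summing out
   the spin b of a leaf with weight e^{K sigma_v0 b} turns sigma_b into
   tanh(K) sigma_v0, so every moment <prod_{i in B} sigma_{j_i}> is multiplied
   by tanh(K)^{#{i in B | j_i = v0}}.  Since the blocks of a partition cover
   each index once, the Ursell function and its derivative in J_{u0v0} are
   multiplied by the positive constant tanh(K)^{#{i | j_i = v0}}.  In the
   extended graph v0 is no longer a site, so the hypothesis applies. *)

Section DerivableBig.
Variables (R : realType) (x : R).

Lemma derivable_big_sum (I : Type) (r : seq I) (P : pred I) (F : I -> R -> R) :
  (forall i, P i -> derivable (F i) x 1) ->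
  derivable (fun t => \sum_(i <- r | P i) F i t) x 1.
Proof.
move=> dF; elim: r => [|i r IHr].
  by under eq_fun do rewrite big_nil; exact: derivable_cst.
under eq_fun do rewrite big_cons.
by case Pi: (P i); [exact: derivableD (dF _ Pi) IHr | exact: IHr].
Qed.

Lemma derivable_big_prod (I : Type) (r : seq I) (P : pred I) (F : I -> R -> R) :
  (forall i, P i -> derivable (F i) x 1) ->
  derivable (fun t => \prod_(i <- r | P i) F i t) x 1.
Proof.
move=> dF; elim: r => [|i r IHr].
  by under eq_fun do rewrite big_nil; exact: derivable_cst.
under eq_fun do rewrite big_cons.
by case Pi: (P i); [exact: derivableM (dF _ Pi) IHr | exact: IHr].
Qed.

Lemma derivable_expR_comp (f : R -> R) :
  derivable f x 1 -> derivable (fun t => expR (f t)) x 1.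
Proof.
move=> /derivable1_diffP df; apply/derivable1_diffP.
have dexp := proj1 (derivable1_diffP _ _) (@derivable_expR R (f x)).
exact: differentiable_comp df dexp.
Qed.

End DerivableBig.

Section IsingBasics.
Variables (R : realType) (V : finType).
Implicit Types (E : {set {set V}}) (J : {set V} -> R).

Definition spin_sum E J m (j : 'I_m -> V) (B : {set 'I_m}) : R :=
  \sum_(s : {ffun V -> bool}) (\prod_(i in B) spin R (s (j i))) * weight E J s.

Lemma partfun_spin_sum E J m (j : 'I_m -> V) :
  partfun E J = spin_sum E J j finset.set0.
Proof. by apply: eq_bigr => s _; rewrite big_set0 mul1r. Qed.

Lemma momentE E J m (j : 'I_m -> V) B :
  moment E J j B = spin_sum E J j B / spin_sum E J j finset.set0.
Proof. by rewrite -partfun_spin_sum. Qed.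

Lemma partfun_gt0 E J : 0 < partfun E J.
Proof.
rewrite /partfun (bigD1 [ffun=> true]) //=.
by rewrite ltr_wpDr ?expR_gt0 // sumr_ge0 // => s _; exact: expR_ge0.
Qed.

Lemma eq_in_ursell E J1 J2 m (j : 'I_m -> V) :
  {in E, J1 =1 J2} -> ursell E J1 j = ursell E J2 j.
Proof.
move=> eqJ; have eqH : hamil E J1 = hamil E J2.
  by apply/funext => s; apply: eq_bigr => e /eqJ ->.
by rewrite /ursell /moment /partfun /weight eqH.
Qed.

Section DerivableUpdJ.
Variables (E : {set {set V}}) (J : {set V} -> R) (e0 : {set V}) (x : R).

Lemma derivable_hamil_updJ s : derivable (fun t => hamil E (updJ J e0 t) s) x 1.
Proof.
apply: derivable_big_sum => e _; rewrite /updJ; case: (e == e0).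
  have did : derivable (fun t : R => t) x 1 by exact: derivable_id.
  exact: derivableM did (derivable_cst _ x 1).
exact: derivable_cst.
Qed.

Lemma derivable_moment_updJ m (j : 'I_m -> V) B :
  derivable (fun t => moment E (updJ J e0 t) j B) x 1.
Proof.
have dZ : derivable (fun t => partfun E (updJ J e0 t)) x 1.
  by apply: derivable_big_sum => s _; exact/derivable_expR_comp/derivable_hamil_updJ.
apply: derivableM; last by apply: derivableV dZ; rewrite gt_eqF ?partfun_gt0.
apply: derivable_big_sum => s _; apply: derivableM; first exact: derivable_cst.
exact/derivable_expR_comp/derivable_hamil_updJ.
Qed.

Lemma derivable_ursell_updJ m (j : 'I_m -> V) :
  derivable (fun t => ursell E (updJ J e0 t) j) x 1.
Proof.
apply: derivable_big_sum => P _; apply: derivableM; first exact: derivable_cst.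
by apply: derivable_big_prod => B _; exact: derivable_moment_updJ.
Qed.

End DerivableUpdJ.
End IsingBasics.

Lemma ursell_scale (R : realType) (V1 V2 : finType)
    (E1 : {set {set V1}}) (J1 : {set V1} -> R) (E2 : {set {set V2}}) (J2 : {set V2} -> R)
    m (j1 : 'I_m -> V1) (j2 : 'I_m -> V2) (w : 'I_m -> R) :
  (forall B, moment E2 J2 j2 B = moment E1 J1 j1 B * \prod_(i in B) w i) ->
  ursell E2 J2 j2 = ursell E1 J1 j1 * \prod_i w i.
Proof.
move=> scale; rewrite /ursell mulr_suml; apply: eq_bigr => P partP.
rewrite (eq_bigr _ (fun B _ => scale B)) big_split /= mulrA; congr (_ * _).
have trivP : finset.trivIset P by case/and3P: partP.
have := @finset.big_trivIset _ R 1 *%R P w trivP; rewrite /= => <-.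
by rewrite (cover_partition partP); apply: eq_bigl => i; rewrite inE.
Qed.

Lemma preimsetK (aT rT : finType) (f : aT -> rT) (A : {set aT}) :
  injective f -> f @^-1: (f @: A) = A.
Proof.
move=> f_inj; apply/setP => x; rewrite inE.
by apply/imsetP/idP => [[y yA /f_inj ->]|xA]; last exists x.
Qed.

Section LeafExtension.
Variables (R : realType) (V : finType) (E : {set {set V}}) (m : nat)
  (j : 'I_m -> V) (v0 : V) (K : R).
Local Notation V' := (V + 'I_m)%type.

Definition leaf_edge (i : 'I_m) : {set V'} := [set inl v0; inr i].
Definition leaf_edges : {set {set V'}} := [set leaf_edge i | i : 'I_m].
Definition lift_edge (e : {set V}) : {set V'} := inl @: e.
Definition ext_graph : {set {set V'}} := lift_edge @: E :|: leaf_edges.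
Definition ext_coupling (J : {set V} -> R) (e : {set V'}) : R :=
  if e \in leaf_edges then K else J (inl @^-1: e).
Definition ext_sites (i : 'I_m) : V' := if j i == v0 then inr i else inl (j i).

Definition glue (sr : {ffun V -> bool} * {ffun 'I_m -> bool}) : {ffun V' -> bool} :=
  [ffun x => match x with inl v => sr.1 v | inr i => sr.2 i end].
Definition unglue (s : {ffun V' -> bool}) : {ffun V -> bool} * {ffun 'I_m -> bool} :=
  ([ffun v => s (inl v)], [ffun i => s (inr i)]).

Lemma glueK : cancel glue unglue.
Proof. by case=> s r; congr pair; apply/ffunP => x; rewrite !ffunE. Qed.

Lemma unglueK : cancel unglue glue.
Proof. by move=> s; apply/ffunP => -[v|i]; rewrite !ffunE. Qed.

Lemma lift_edge_inj : injective lift_edge.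
Proof. exact: imset_inj inl_inj. Qed.

Lemma lift_edge2 u v : lift_edge [set u; v] = [set inl u; inl v].
Proof. by rewrite /lift_edge imsetU1 imset_set1. Qed.

Lemma lift_edgeK e : inl @^-1: lift_edge e = e.
Proof. exact: preimsetK inl_inj. Qed.

Lemma leaf_edge_inj : injective leaf_edge.
Proof.
move=> a b eq_ab; have : (inr a : V') \in leaf_edge b by rewrite -eq_ab !inE eqxx orbT.
by rewrite !inE => /orP[//|/eqP [->]].
Qed.

Lemma lift_edge_notin_leaf_edges e : lift_edge e \notin leaf_edges.
Proof.
apply/imsetP => -[i _ eq_e].
have : (inr i : V') \in lift_edge e by rewrite eq_e !inE eqxx orbT.
by case/imsetP.
Qed.

Lemma ext_coupling_lift J e : ext_coupling J (lift_edge e) = J e.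
Proof. by rewrite /ext_coupling (negbTE (lift_edge_notin_leaf_edges e)) lift_edgeK. Qed.

Lemma hamil_glue J s r :
  hamil ext_graph (ext_coupling J) (glue (s, r)) =
  hamil E J s + \sum_i K * (spin R (s v0) * spin R (r i)).
Proof.
rewrite /hamil /ext_graph (eq_bigl [predU lift_edge @: E & leaf_edges]); last first.
  by move=> e; rewrite !inE.
rewrite bigU /=; last first.
  apply/pred0P => e /=; apply/negbTE/negP => /andP[/imsetP[e1 _ ->]].
  by rewrite (negbTE (lift_edge_notin_leaf_edges e1)).
congr (_ + _).
  rewrite big_imset /=; last by move=> e1 e2 _ _; exact: lift_edge_inj.
  apply: eq_bigr => e _; rewrite ext_coupling_lift big_imset /=; last first.
    by move=> a b _ _; exact: inl_inj.
  by congr (_ * _); apply: eq_bigr => v _; rewrite ffunE.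
rewrite big_imset /=; last by move=> a b _ _; exact: leaf_edge_inj.
apply: eq_bigr => i _; rewrite /ext_coupling ifT; last by apply/imsetP; exists i.
by rewrite big_setU1 ?big_set1 ?ffunE ?inE.
Qed.

(* Twice cosh K and sinh K: summing out a leaf spin b gives
   sum_b e^{K sigma b} = leaf_cosh and sum_b b e^{K sigma b} = sigma leaf_sinh. *)
Definition leaf_cosh : R := expR K + expR (- K).
Definition leaf_sinh : R := expR K - expR (- K).

Definition leaf_factor (B : {set 'I_m}) (i : 'I_m) : R :=
  if (i \in B) && (j i == v0) then leaf_sinh else leaf_cosh.

Definition leaf_ratio (i : 'I_m) : R := if j i == v0 then leaf_sinh / leaf_cosh else 1.

Lemma leaf_cosh_gt0 : 0 < leaf_cosh.
Proof. by rewrite addr_gt0 ?expR_gt0. Qed.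

Lemma leaf_ratio_gt0 i : 0 < K -> 0 < leaf_ratio i.
Proof.
move=> K_gt0; rewrite /leaf_ratio; case: (j i == v0) => //.
by rewrite divr_gt0 ?leaf_cosh_gt0 // subr_gt0 ltr_expR; lra.
Qed.

Definition leaf_term (s : {ffun V -> bool}) (B : {set 'I_m}) (i : 'I_m) (b : bool) : R :=
  (if i \in B then spin R (if j i == v0 then b else s (j i)) else 1)
  * expR (K * (spin R (s v0) * spin R b)).

Lemma sum_leaf_term s B i :
  \sum_b leaf_term s B i b = (if i \in B then spin R (s (j i)) else 1) * leaf_factor B i.
Proof.
have spinM (c d : bool) : K * (spin R c * spin R d) = if c == d then K else - K.
  by case: c; case: d; rewrite /spin /= ?mulrNN ?mul1r ?mulr1 ?mulrN1.
rewrite big_bool /leaf_term /leaf_factor /leaf_cosh /leaf_sinh !spinM.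
by case: (j i =P v0) => [->|_]; case: (i \in B); case: (s v0); rewrite /spin /=;
  try case: (s (j i)); lra.
Qed.

Lemma glue_term J s r (B : {set 'I_m}) :
  (\prod_(i in B) spin R (glue (s, r) (ext_sites i)))
    * weight ext_graph (ext_coupling J) (glue (s, r))
  = weight E J s * \prod_i leaf_term s B i (r i).
Proof.
rewrite /weight hamil_glue expRD /leaf_term big_split /= -big_mkcond /= mulrCA.
congr (_ * (_ * _)); last exact: expR_sum.
by apply: eq_bigr => i _; rewrite /ext_sites; case: eqP; rewrite ffunE.
Qed.

Lemma spin_sum_ext J B :
  spin_sum ext_graph (ext_coupling J) ext_sites B
  = spin_sum E J j B * \prod_i leaf_factor B i.
Proof.
rewrite /spin_sum (reindex glue); last first.
  by apply: onW_bij; exists unglue; [exact: glueK | exact: unglueK].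
pose F s r := (\prod_(i in B) spin R (glue (s, r) (ext_sites i)))
  * weight ext_graph (ext_coupling J) (glue (s, r)).
rewrite (eq_bigr (fun sr => F sr.1 sr.2)); last by case.
rewrite -pair_bigA /= mulr_suml; apply: eq_bigr => s _.
under eq_bigr do rewrite /F glue_term.
rewrite -mulr_sumr -bigA_distr_bigA /=.
rewrite (eq_bigr _ (fun i _ => sum_leaf_term s B i)) big_split /= -big_mkcond /=.
by rewrite mulrA [weight _ _ _ * _]mulrC.
Qed.

Lemma moment_ext J B :
  moment ext_graph (ext_coupling J) ext_sites B
  = moment E J j B * \prod_(i in B) leaf_ratio i.
Proof.
rewrite !momentE !spin_sum_ext invfM mulrACA; congr (_ * _).
have cosh_neq0 : leaf_cosh != 0 by rewrite gt_eqF ?leaf_cosh_gt0.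
rewrite -prodf_div [RHS]big_mkcond /=; apply: eq_bigr => i _.
rewrite /leaf_factor /leaf_ratio inE /=.
by case: (i \in B); case: (j i == v0); rewrite ?divff.
Qed.

Lemma ursell_ext J :
  ursell ext_graph (ext_coupling J) ext_sites = ursell E J j * \prod_i leaf_ratio i.
Proof. exact/ursell_scale/moment_ext. Qed.

Lemma updJ_ext_coupling J e0 t :
  {in ext_graph, updJ (ext_coupling J) (lift_edge e0) t =1 ext_coupling (updJ J e0 t)}.
Proof.
move=> e; rewrite inE => /orP[/imsetP[e1 _ ->]|leaf_e].
  by rewrite /updJ !ext_coupling_lift (inj_eq lift_edge_inj).
have e_neq : e != lift_edge e0.
  by apply: contraTneq leaf_e => ->; exact: lift_edge_notin_leaf_edges.
by rewrite /updJ (negbTE e_neq) /ext_coupling leaf_e.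
Qed.

Lemma dursell_ext J e0 :
  dursell ext_graph (ext_coupling J) ext_sites (lift_edge e0)
  = \prod_i leaf_ratio i * dursell E J j e0.
Proof.
rewrite /dursell ext_coupling_lift -derive1Ml; last exact: derivable_ursell_updJ.
by under eq_fun do rewrite (eq_in_ursell _ (updJ_ext_coupling J e0 _)) ursell_ext mulrC.
Qed.

Lemma simple_graph_ext : simple_graph E -> simple_graph ext_graph.
Proof.
move=> simpleE e; rewrite inE => /orP[/imsetP[e1 /simpleE <- ->]|/imsetP[i _ ->]].
  exact/card_imset/inl_inj.
by rewrite cards2.
Qed.

Lemma ferromagnetic_ext J :
  0 <= K -> ferromagnetic E J -> ferromagnetic ext_graph (ext_coupling J).
Proof.
move=> K_ge0 ferroJ e; rewrite inE => /orP[/imsetP[e1 /ferroJ Je1 ->]|leaf_e].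
  by rewrite ext_coupling_lift.
by rewrite /ext_coupling leaf_e.
Qed.

Lemma ext_sites_neq i : ext_sites i != inl v0.
Proof. by rewrite /ext_sites; case: (j i =P v0) => // /eqP ne; rewrite (inj_eq inl_inj). Qed.

End LeafExtension.

Theorem mainTheorem11 (R : realType) :
  (forall (V : finType) (E : {set {set V}}) (J : {set V} -> R)
          (k : nat) (j : 'I_(k.*2) -> V) (u0 v0 : V),
      simple_graph E -> ferromagnetic E J -> (0 < k)%N ->
      [set u0; v0] \in E -> (forall i, j i != v0) ->
      0 <= (-1) ^+ k.-1 * dursell E J j [set u0; v0]) ->
  (forall (V : finType) (E : {set {set V}}) (J : {set V} -> R)
          (k : nat) (j : 'I_(k.*2) -> V) (u0 v0 : V),
      simple_graph E -> ferromagnetic E J -> (0 < k)%N ->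
      [set u0; v0] \in E -> (exists i, j i = u0) -> (exists i, j i = v0) ->
      0 <= (-1) ^+ k.-1 * dursell E J j [set u0; v0]).
Proof.
(* The sites need not contain u0 or v0: the leaf extension works for every j. *)
move=> no_site_at_v0 V E J k j u0 v0 simpleE ferroJ k_gt0 e0E _ _.
have ratio_gt0 : 0 < \prod_i leaf_ratio j v0 (1 : R) i.
  by apply: prodr_gt0 => i _; exact: leaf_ratio_gt0.
rewrite -(pmulr_rge0 _ ratio_gt0) mulrCA -dursell_ext lift_edge2.
apply: no_site_at_v0.
- exact: simple_graph_ext.
- exact: ferromagnetic_ext.
- exact: k_gt0.
- by rewrite -lift_edge2 inE imset_f.
- exact: ext_sites_neq.
Qed.
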